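(* Let $\mathcal{A}$ be an essential and irreducible hyperplane arrangement in $V\cong\mathbb{K}^\ell$. Suppose there is a subset $S\subseteq\mathcal{A}$ with $|S|=\ell+1$ and $\langle S\rangle_{\mathcal{A}}=\mathcal{A}$. Then $\mathcal{A}$ is projectively unique, i.e. for every arrangement $\mathcal{C}$ in $V$ with $L(\mathcal{C})\cong L(\mathcal{A})$ as posets there is $\varphi\in\mathrm{GL}(V)$ with $\mathcal{C}=\{\varphi(H)\mid H\in\mathcal{A}\}$.
   Context: For an arrangement $\mathcal{A}$, $L(\mathcal{A})$ is the set of all intersections of subsets of $\mathcal{A}$, ordered by reverse inclusion. An arrangement is essential if the intersection of all its hyperplanes is $\{0\}$, and irreducible if it is not (up to linear isomorphism) a product of two nonempty arrangements. For $\varnothing\neq S\subseteq\mathcal{A}$ set $\mathrm{Gen}_0(\mathcal{A},S):=S$ and inductively $\mathrm{Gen}_{i+1}(\mathcal{A},S):=\{H\in\mathcal{A}\mid \exists\, J\subseteq L(\mathrm{Gen}_i(\mathcal{A},S)) \text{ with } H=\sum_{X\in J}X\}$ (sum of subspaces). The subarrangement generated by $S$ is $\langle S\rangle_{\mathcal{A}}:=\bigcup_{i\ge0}\mathrm{Gen}_i(\mathcal{A},S)$. *)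

From HB Require Import structures.
From mathcomp Require Import all_boot all_order all_algebra.
From mathcomp Require Import finmap.
Set Implicit Arguments. Unset Strict Implicit. Unset Printing Implicit Defensive.
Import GRing.Theory.
Local Open Scope ring_scope.
Local Open Scope fset_scope.

Section Arr.
Variables (K : fieldType) (l : nat).
Notation V := 'rV[K]_l.
Notation sub := {vspace V}.

Definition is_hyperplane (H : sub) : Prop := (\dim H).+1 = l.

Definition arrangement (A : {fset sub}) : Prop :=
  forall H, H \in A -> is_hyperplane H.

(* intersection lattice of a (finite) family of subspaces given by predicate P:
   all intersections of finite subfamilies (the empty intersection being V) *)
Definition Lset (P : sub -> Prop) (X : sub) : Prop :=
  exists B : {fset sub}, (forall H, H \in B -> P H) /\ X = (\bigcap_(H <- B) H)%VS.

Definition Lat (A : {fset sub}) : sub -> Prop := Lset (fun H => H \in A).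

Definition essential (A : {fset sub}) : Prop := (\bigcap_(H <- A) H)%VS = 0%VS.

(* A is reducible iff, up to a linear change of coordinates, A = A1 x A2 with
   A1, A2 nonempty arrangements; i.e. V = V1 (+) V2 internally and A is the
   union of nonempty A1, A2 with every H in A1 containing V2 and every H in A2
   containing V1. *)
Definition irreducible (A : {fset sub}) : Prop :=
  ~ exists (V1 V2 : sub) (A1 A2 : {fset sub}),
      [/\ directv (V1 + V2)%VS /\ (V1 + V2)%VS = fullv,
          A = A1 `|` A2, A1 != fset0, A2 != fset0 &
          (forall H, H \in A1 -> (V2 <= H)%VS) /\ (forall H, H \in A2 -> (V1 <= H)%VS)].

Fixpoint Gen (A S : {fset sub}) (i : nat) : sub -> Prop :=
  match i with
  | 0 => fun H => H \in S
  | i'.+1 => fun H => H \in A /\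
      exists J : {fset sub}, (forall X, X \in J -> Lset (Gen A S i') X) /\
                             H = (\sum_(X <- J) X)%VS
  end.

Definition generated (A S : {fset sub}) (H : sub) : Prop := exists i, Gen A S i H.

Definition Lat_iso (C A : {fset sub}) : Prop :=
  exists g : sub -> sub,
    [/\ forall X, Lat A X -> Lat C (g X),
        forall Y, Lat C Y -> exists2 X, Lat A X & g X = Y &
        forall X Y, Lat A X -> Lat A Y -> ((X <= Y)%VS <-> (g X <= g Y)%VS)].

Definition proj_unique (A : {fset sub}) : Prop :=
  forall C : {fset sub}, arrangement C -> Lat_iso C A ->
    exists phi : 'End(V), lker phi = 0%VS /\
      C = [fset (phi @: H)%VS | H in A].

End Arr.

From HB Require Import structures.
From mathcomp Require Import all_boot all_order all_algebra.
From mathcomp Require Import finmap zify.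

(** The intersection of the generators [S] lies in every hyperplane they
   generate, hence in the intersection of [A], which is [0]. Among the [l+1]
   hyperplanes of [S] one, [H0], is then redundant: the [l] others meet in [0],
   so they are the coordinate hyperplanes of a basis whose axes are the lines
   [L_i = \bigcap_(j != i) Hs_j]. A lattice isomorphism [g] sends this frame to
   a frame of [C] and preserves which axes lie in [H0], so after rescaling the
   axes some [phi] in [GL(V)] agrees with [g] on [S]. As [phi] maps sums and
   intersections of subspaces as [g] maps joins and meets, [phi] and [g] agree
   on everything generated by [S], i.e. on [A]. *)

Set Implicit Arguments. Unset Strict Implicit. Unset Printing Implicit Defensive.
Import GRing.Theory.
Local Open Scope ring_scope.
Local Open Scope fset_scope.

Section Arrangements.
Variables (K : fieldType) (l : nat).
Local Notation V := 'rV[K]_l.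
Local Notation sub := {vspace V}.
Implicit Types (U W H : sub) (x y : V).

Lemma dimv_fullv_row : \dim (fullv : sub) = l.
Proof. by rewrite dimvf /dim /= mul1n. Qed.

Lemma dimv_cap_ltn U W : ~~ (U <= W)%VS -> (\dim (U :&: W) < \dim U)%N.
Proof.
move=> nUW; have [le eq] := dimv_leqif_sup (capvSl U W).
by rewrite ltn_neqAle le andbT eq subv_cap subvv.
Qed.

Lemma subv_bigcap_seqP (B : seq sub) U :
  reflect (forall H, H \in B -> (U <= H)%VS) (U <= \bigcap_(H <- B) H)%VS.
Proof.
elim: B => [|a B IH]; first by rewrite big_nil subvf; constructor.
rewrite big_cons subv_cap; apply: (iffP andP) => [[Ua /IH UB] H|h].
  by rewrite in_cons => /orP[/eqP->|/UB].
by split; [apply: h; rewrite mem_head | apply/IH => H HB; apply: h; rewrite in_cons HB orbT].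
Qed.

Lemma bigcapv_seq_inf (B : seq sub) H : H \in B -> (\bigcap_(H' <- B) H' <= H)%VS.
Proof. by move=> HB; move/subv_bigcap_seqP: (subvv (\bigcap_(H' <- B) H')%VS); apply. Qed.

Lemma subv_sum_seqP (I : eqType) (r : seq I) (F : I -> sub) U :
  reflect (forall i, i \in r -> (F i <= U)%VS) (\sum_(i <- r) F i <= U)%VS.
Proof.
elim: r => [|a r IH]; first by rewrite big_nil sub0v; constructor.
rewrite big_cons subv_add; apply: (iffP andP) => [[aU /IH rU] i|h].
  by rewrite in_cons => /orP[/eqP->|/rU].
by split; [apply: h; rewrite mem_head | apply/IH => i ir; apply: h; rewrite in_cons ir orbT].
Qed.

Lemma sumv_seq_sup (J : seq sub) X : X \in J -> (X <= \sum_(Y <- J) Y)%VS.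
Proof. by move=> XJ; move/subv_sum_seqP: (subvv (\sum_(Y <- J) Y)%VS); apply. Qed.

Lemma lker0_limg_bigcap (f : 'End(V)) (I : Type) (r : seq I) (P : pred I) (F : I -> sub) :
  lker f == 0%VS ->
  (f @: \bigcap_(i <- r | P i) F i)%VS = (\bigcap_(i <- r | P i) f @: F i)%VS.
Proof.
move=> kf0; elim: r => [|a r IH]; first by rewrite !big_nil lker0_limgf.
by rewrite !big_cons; case: (P a); rewrite ?lker0_img_cap // IH.
Qed.

Lemma hyperplane_neq_fullv H : is_hyperplane H -> H != fullv.
Proof.
by move=> dH; apply/eqP => HV; move: dH; rewrite /is_hyperplane HV dimv_fullv_row; lia.
Qed.

Lemma hyperplane_subv_eq H U : is_hyperplane H -> (H <= U)%VS -> U != fullv -> H = U.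
Proof.
move=> dH HU; apply: contraNeq; rewrite eqEdim HU /= -ltnNge => ltHU.
by rewrite eqEdim subvf dimv_fullv_row; move: dH ltHU; rewrite /is_hyperplane; lia.
Qed.

Lemma lker0_limg_hyperplane (f : 'End(V)) H H' : lker f == 0%VS ->
  is_hyperplane H -> is_hyperplane H' -> (f @: H <= H')%VS -> (f @: H)%VS = H'.
Proof.
move=> /eqP kf0 hH hH' fHH'; apply: hyperplane_subv_eq fHH' (hyperplane_neq_fullv hH').
by rewrite /is_hyperplane limg_dim_eq // kf0 capv0.
Qed.

Lemma hyperplane_line_decomp H y x : is_hyperplane H -> y \notin H ->
  exists c : K, x - c *: y \in H.
Proof.
move=> hH yH.
have /memv_addP[h hH' [w /vlineP[c ->] ->]] : x \in (H + <[y]>)%VS.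
  suff -> : (H + <[y]>)%VS = fullv by rewrite memvf.
  apply/eqP; apply: contraNT yH => /(hyperplane_subv_eq hH (addvSl H _)) ->.
  exact: subvP (addvSr H _) _ (memv_line y).
by exists c; rewrite addrK.
Qed.

Lemma memv_sub_scale_notin H u y c : u \notin H -> y - c *: u \in H ->
  (y \in H) = (c == 0).
Proof.
move=> uH yuH; rewrite -[y](subrK (c *: u)) rpredDl //.
by rewrite rpredZeq (negbTE uH) orbF.
Qed.

Lemma memv_sum_scale_notin (I : finType) H u (us : I -> V) (c a : I -> K) :
  u \notin H -> (forall i, us i - c i *: u \in H) ->
  (\sum_i a i *: us i \in H) = (\sum_i a i * c i == 0).
Proof.
move=> uH usH; apply: memv_sub_scale_notin uH _.
have -> : \sum_i a i *: us i - (\sum_i a i * c i) *: u = \sum_i a i *: (us i - c i *: u).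
  rewrite scaler_suml -sumrB; apply: eq_bigr => i _.
  by rewrite scalerBr scalerA.
by apply: rpred_sum => i _; apply: rpredZ.
Qed.

Lemma dimv_bigcap_hyperplanes (I : finType) (P : pred I) (F : I -> sub) :
  (forall i, P i -> is_hyperplane (F i)) ->
  (l <= \dim (\bigcap_(i | P i) F i)%VS + #|P|)%N.
Proof.
move=> hF; have -> : #|P| = count P (index_enum I).
  by rewrite cardE /enum_mem size_filter /index_enum; unlock.
elim: (index_enum I) => [|a r IH]; first by rewrite big_nil dimv_fullv_row addn0.
rewrite big_cons /=; case Pa: (P a) => //=.
have := dimv_sum_cap (F a) (\bigcap_(i <- r | P i) F i)%VS.
have := dimvS (subvf (F a + \bigcap_(i <- r | P i) F i)%VS).
have := hF a Pa; rewrite /is_hyperplane dimv_fullv_row; lia.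
Qed.

Lemma exists_nth_supv_bigcap_take (s : seq sub) : size s = l.+1 ->
  exists2 k, (k < l.+1)%N & (\bigcap_(H <- take k s) H <= nth 0%VS s k)%VS.
Proof.
move=> ss; have [k sk|nsub] :=
  pickP (fun k : 'I_l.+1 => (\bigcap_(H <- take k s) H <= nth 0%VS s k)%VS).
  by exists k.
exfalso; suff dim_take k : (k <= l.+1)%N -> (\dim (\bigcap_(H <- take k s) H)%VS + k <= l)%N.
  by have := dim_take _ (leqnn _); lia.
elim: k => [|k IH] lek; first by rewrite take0 big_nil dimv_fullv_row addn0.
rewrite (take_nth 0%VS) ?ss // -cats1 big_cat /= big_cons big_nil capvf.
have := dimv_cap_ltn (negbT (nsub (Ordinal lek))); have := IH (ltnW lek); rewrite /=; lia.
Qed.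

Definition adapted (F : 'I_l -> sub) (v : 'I_l -> V) : Prop :=
  (forall i j, j != i -> v i \in F j) /\ (forall i, v i \notin F i).

Definition rows_mx (v : 'I_l -> V) : 'M[K]_l := \matrix_i v i.

Lemma mul_rows_mx v x : x *m rows_mx v = \sum_i x 0 i *: v i.
Proof. by rewrite mulmx_sum_row; apply: eq_bigr => i _; rewrite rowK. Qed.

Section Adapted.
Variables (F : 'I_l -> sub) (v : 'I_l -> V).
Hypothesis vF : adapted F v.

Lemma adapted_coord_eq0 x k : x *m rows_mx v \in F k -> x 0 k = 0.
Proof.
have [v_in v_notin] := vF.
have rest : \sum_(i | i != k) x 0 i *: v i \in F k.
  by apply: rpred_sum => i ik; apply: rpredZ; apply: v_in; rewrite eq_sym.
by rewrite mul_rows_mx (bigD1 k) //= rpredDr // rpredZeq (negbTE (v_notin k)) orbF => /eqP.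
Qed.

Lemma rows_mx_unit : rows_mx v \in unitmx.
Proof.
rewrite -row_free_unit; apply: inj_row_free => x x0.
by apply/rowP => k; rewrite mxE; apply: adapted_coord_eq0; rewrite x0 mem0v.
Qed.

Lemma rows_mxK y : y *m invmx (rows_mx v) *m rows_mx v = y.
Proof. by rewrite mulmxKV // rows_mx_unit. Qed.

Lemma memv_adaptedE i U : (v i \in U) = (\bigcap_(j | j != i) F j <= U)%VS.
Proof.
have [v_in _] := vF.
apply/idP/idP => [vU|sU]; last first.
  by apply: (subvP sU); rewrite memvE; apply/subv_bigcapP => j ji; exact: v_in.
apply/subvP => y; rewrite memvE => /subv_bigcapP yF.
rewrite -[y]rows_mxK mul_rows_mx (bigD1 i) //= big1 ?addr0 ?memvZ // => j ji.
by rewrite adapted_coord_eq0 ?scale0r // rows_mxK; apply: yF.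
Qed.

Lemma exists_adapted_notin H : is_hyperplane H -> exists k, v k \notin H.
Proof.
move=> hH; apply/existsP; rewrite -negb_forall.
apply: contra (hyperplane_neq_fullv hH) => /forallP vH.
apply/eqP/vspaceP => y; rewrite memvf -[y]rows_mxK mul_rows_mx.
by apply: rpred_sum => i _; apply: memvZ.
Qed.

End Adapted.

Lemma adaptedZ F v (a : 'I_l -> K) :
  (forall i, a i != 0) -> adapted F v -> adapted F (fun i => a i *: v i).
Proof.
move=> a0 [v_in v_notin]; split => [i j ji|i]; rewrite rpredZeq (negbTE (a0 i)) //=.
exact: v_in.
Qed.

Lemma exists_adapted (F : 'I_l -> sub) :
  (forall i, ~~ (\bigcap_(j | j != i) F j <= F i)%VS) -> exists v, adapted F v.
Proof.
move=> nsub; have [v vL vF] := fin_all_exists2 (fun i => subvPn (nsub i)).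
exists v; split=> [i j ji|i]; last exact: vF.
by move: (vL i); rewrite memvE => /subv_bigcapP; apply.
Qed.

Lemma bigcap_neq_not_subv (F : 'I_l -> sub) : (forall i, is_hyperplane (F i)) ->
  (\bigcap_i F i)%VS = 0%VS -> forall i, ~~ (\bigcap_(j | j != i) F j <= F i)%VS.
Proof.
move=> hF F0 i; apply/negP => sub_i.
have := @dimv_bigcap_hyperplanes _ (fun j => j != i) F (fun j _ => hF j).
suff -> : (\bigcap_(j | j != i) F j)%VS = 0%VS.
  by rewrite dimv0 add0n cardC1 card_ord; have := ltn_ord i; lia.
apply/eqP; rewrite -subv0 -F0; apply/subv_bigcapP => j _.
by have [->|ji] := eqVneq j i; rewrite // (bigD1 j) ?capvSl.
Qed.

Lemma exists_lfun_rows_mx (v w : 'I_l -> V) :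
  rows_mx v \in unitmx -> rows_mx w \in unitmx ->
  exists2 f : 'End(V), lker f == 0%VS & forall x, f (x *m rows_mx v) = x *m rows_mx w.
Proof.
move=> uv uw; set M := invmx (rows_mx v) *m rows_mx w.
have uM : M \in unitmx by rewrite unitmx_mul unitmx_inv uv uw.
exists (linfun (mulmxr M)) => [|x]; last by rewrite lfunE /= mulmxA mulmxK.
by apply/lker0P; apply: (can_inj (g := mulmxr (invmx M))) => y; rewrite lfunE /= mulmxK.
Qed.

Section FrameMap.
Variables (Hs Hs' : 'I_l -> sub) (H0 H0' : sub) (v v' : 'I_l -> V).
Hypotheses (hHs : forall i, is_hyperplane (Hs i)) (hHs' : forall i, is_hyperplane (Hs' i)).
Hypotheses (hH0 : is_hyperplane H0) (hH0' : is_hyperplane H0').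
Hypotheses (vF : adapted Hs v) (v'F : adapted Hs' v').
Hypothesis vH0 : forall i, (v i \in H0) = (v' i \in H0').

Lemma exists_frame_map : exists phi : 'End(V),
  [/\ lker phi == 0%VS, forall i, (phi @: Hs i)%VS = Hs' i & (phi @: H0)%VS = H0'].
Proof.
have [k vk] := exists_adapted_notin vF hH0.
have v'k : v' k \notin H0' by rewrite -vH0.
have [c cP] := fin_all_exists (fun i => hyperplane_line_decomp (v i) hH0 vk).
have [c' c'P] := fin_all_exists (fun i => hyperplane_line_decomp (v' i) hH0' v'k).
have c_eq0 i : (c i == 0) = (c' i == 0).
  by rewrite -(memv_sub_scale_notin vk (cP i)) -(memv_sub_scale_notin v'k (c'P i)) vH0.
(* With [v i = c i v k] mod [H0] and [v' i = c' i v' k] mod [H0'], the rescaled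
   [w i := (c i / c' i) v' i] satisfy [w i = c i v' k] mod [H0'], so the linear
   map [v i |-> w i] sends [H0] into [H0']. *)
pose a i := if c' i == 0 then 1 else c i / c' i.
have a_neq0 i : a i != 0.
  by rewrite /a; case: ifPn => [_|c'i]; rewrite ?oner_eq0 // mulf_eq0 invr_eq0 c_eq0 negb_or c'i.
pose w i := a i *: v' i.
have wF : adapted Hs' w := adaptedZ a_neq0 v'F.
have wH0 i : w i - c i *: v' k \in H0'.
  rewrite /w /a; case: ifPn => [c'0|c'i].
    have /eqP-> : c i == 0 by rewrite c_eq0.
    by rewrite scale1r scale0r subr0 (memv_sub_scale_notin v'k (c'P i)).
  have -> : c i / c' i *: v' i - c i *: v' k = c i / c' i *: (v' i - c' i *: v' k).
    by rewrite scalerBr scalerA divfK.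
  exact: memvZ.
have [phi kphi phiE] := exists_lfun_rows_mx (rows_mx_unit vF) (rows_mx_unit wF).
have phi_coord y : phi y = \sum_j (y *m invmx (rows_mx v)) 0 j *: w j.
  by rewrite -{1}(rows_mxK vF y) phiE mul_rows_mx.
exists phi; split=> // [i|].
  apply: lker0_limg_hyperplane kphi (hHs i) (hHs' i) _.
  apply/subvP => _ /memv_imgP[y yHs ->]; rewrite phi_coord.
  apply: rpred_sum => j _; have [->|ji] := eqVneq j i; last first.
    by apply: memvZ; apply: wF.1; rewrite eq_sym.
  have -> : (y *m invmx (rows_mx v)) 0 i = 0.
    by apply: (adapted_coord_eq0 vF); rewrite (rows_mxK vF).
  by rewrite scale0r mem0v.
apply: lker0_limg_hyperplane kphi hH0 hH0' _.
apply/subvP => _ /memv_imgP[y yH0 ->].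
rewrite phi_coord (memv_sum_scale_notin _ v'k wH0).
by rewrite -(memv_sum_scale_notin _ vk cP) -mul_rows_mx (rows_mxK vF).
Qed.

End FrameMap.

Section Lattice.
Variable P : sub -> Prop.

Lemma Lset_full : Lset P fullv.
Proof.
exists fset0; split=> [H|]; first by rewrite in_fset0.
by rewrite big_seq_fset0.
Qed.

Lemma Lset_base H : P H -> Lset P H.
Proof.
move=> PH; exists [fset H]; split=> [H'|]; first by rewrite in_fset1 => /eqP->.
apply/eqP; rewrite eqEsubv bigcapv_seq_inf ?in_fset1 ?andbT //.
by apply/subv_bigcap_seqP => H'; rewrite in_fset1 => /eqP->.
Qed.

Lemma Lset_cap X Y : Lset P X -> Lset P Y -> Lset P (X :&: Y)%VS.
Proof.
move=> [BX [PX ->]] [BY [PY ->]]; exists (BX `|` BY); split.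
  by move=> H; rewrite in_fsetU => /orP[/PX|/PY].
apply/eqP; rewrite eqEsubv subv_cap; apply/and3P; split.
- apply/subv_bigcap_seqP => H; rewrite in_fsetU => /orP[HX|HY].
    exact: subv_trans (capvSl _ _) (bigcapv_seq_inf HX).
  exact: subv_trans (capvSr _ _) (bigcapv_seq_inf HY).
- by apply/subv_bigcap_seqP => H HX; apply: bigcapv_seq_inf; rewrite in_fsetU HX.
by apply/subv_bigcap_seqP => H HY; apply: bigcapv_seq_inf; rewrite in_fsetU HY orbT.
Qed.

Lemma Lset_bigcap (I : Type) (r : seq I) (Q : pred I) (F : I -> sub) :
  (forall i, Q i -> Lset P (F i)) -> Lset P (\bigcap_(i <- r | Q i) F i)%VS.
Proof.
move=> LF; elim: r => [|a r IH]; first by rewrite big_nil; apply: Lset_full.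
by rewrite big_cons; case: ifP => // Qa; apply: Lset_cap => //; apply: LF.
Qed.

Lemma Lset_fullVsub X : Lset P X -> X = fullv \/ exists2 H, P H & (X <= H)%VS.
Proof.
move=> [B [PB ->]]; have [->|[H HB]] := fset_0Vmem B; last first.
  by right; exists H; [apply: PB | apply: bigcapv_seq_inf].
by left; rewrite big_seq_fset0.
Qed.

End Lattice.

Definition lattice_iso_map (C A : {fset sub}) (g : sub -> sub) : Prop :=
  [/\ forall X, Lat A X -> Lat C (g X),
      forall Y, Lat C Y -> exists2 X, Lat A X & g X = Y &
      forall X Y, Lat A X -> Lat A Y -> ((X <= Y)%VS <-> (g X <= g Y)%VS)].

Section LatticeIso.
Variables (A C : {fset sub}) (g : sub -> sub).
Hypotheses (arrA : arrangement A) (arrC : arrangement C).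
Hypothesis giso : lattice_iso_map C A g.

Lemma lat_iso_Lat X : Lat A X -> Lat C (g X).
Proof. by case: giso => gL _ _; apply: gL. Qed.

Lemma lat_iso_surj Y : Lat C Y -> exists2 X, Lat A X & g X = Y.
Proof. by case: giso => _ gS _; apply: gS. Qed.

Lemma lat_iso_subvE X Y : Lat A X -> Lat A Y -> (X <= Y)%VS = (g X <= g Y)%VS.
Proof. by case: giso => _ _ gI LX LY; apply/idP/idP => /(gI _ _ LX LY). Qed.

Lemma lat_iso_inj X Y : Lat A X -> Lat A Y -> g X = g Y -> X = Y.
Proof.
move=> LX LY gXY; apply/eqP; rewrite eqEsubv.
by rewrite (lat_iso_subvE LX LY) (lat_iso_subvE LY LX) gXY subvv.
Qed.

Lemma lat_iso_full : g fullv = fullv.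
Proof.
have [X LX gX] := lat_iso_surj (Lset_full _).
apply/eqP; rewrite eqEsubv subvf -{1}gX -lat_iso_subvE ?subvf //.
exact: Lset_full.
Qed.

Lemma lat_iso_cap X Y : Lat A X -> Lat A Y -> g (X :&: Y)%VS = (g X :&: g Y)%VS.
Proof.
move=> LX LY; have LXY := Lset_cap LX LY.
have [Z LZ gZ] := lat_iso_surj (Lset_cap (lat_iso_Lat LX) (lat_iso_Lat LY)).
apply/eqP; rewrite eqEsubv subv_cap -!lat_iso_subvE ?capvSl ?capvSr //=.
rewrite -gZ -lat_iso_subvE // subv_cap.
by rewrite (lat_iso_subvE LZ LX) (lat_iso_subvE LZ LY) gZ capvSl capvSr.
Qed.

Lemma lat_iso_bigcap (I : Type) (r : seq I) (Q : pred I) (F : I -> sub) :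
  (forall i, Q i -> Lat A (F i)) ->
  g (\bigcap_(i <- r | Q i) F i)%VS = (\bigcap_(i <- r | Q i) g (F i))%VS.
Proof.
move=> LF; elim: r => [|a r IH]; first by rewrite !big_nil lat_iso_full.
rewrite !big_cons; case: ifP => // Qa.
by rewrite lat_iso_cap ?IH //; [apply: LF | apply: Lset_bigcap].
Qed.

Lemma lat_iso_neq_full H : H \in A -> g H != fullv.
Proof.
move=> HA; rewrite -lat_iso_full; apply: contra_neq (hyperplane_neq_fullv (arrA HA)).
exact: lat_iso_inj (Lset_base HA) (Lset_full _).
Qed.

Lemma lat_iso_mem H : H \in A -> g H \in C.
Proof.
move=> HA; have LH : Lat A H := Lset_base HA.
have [/eqP|[H' H'C gHH']] := Lset_fullVsub (lat_iso_Lat LH).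
  by rewrite (negbTE (lat_iso_neq_full HA)).
have [Y LY gY] := lat_iso_surj (Lset_base H'C).
have HY : (H <= Y)%VS by rewrite lat_iso_subvE // gY.
have nfullY : Y != fullv.
  by apply: contra_neq (hyperplane_neq_fullv (arrC H'C)) => YV; rewrite -gY YV lat_iso_full.
by rewrite (hyperplane_subv_eq (arrA HA) HY nfullY) gY.
Qed.

Lemma lat_iso_preimage H' : H' \in C -> exists2 H, H \in A & g H = H'.
Proof.
move=> H'C; have [X LX gX] := lat_iso_surj (Lset_base H'C).
have [XV|[H HA XH]] := Lset_fullVsub LX.
  by move: (hyperplane_neq_fullv (arrC H'C)); rewrite -gX XV lat_iso_full eqxx.
exists H => //; apply/esym/(hyperplane_subv_eq (arrC H'C)); last exact: lat_iso_neq_full.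
by rewrite -gX -lat_iso_subvE //; apply: Lset_base.
Qed.

Lemma lat_iso_image (phi : 'End(V)) :
  (forall H, H \in A -> (phi @: H)%VS = g H) -> C = [fset (phi @: H)%VS | H in A].
Proof.
move=> phiA; apply/fsetP => H'; apply/idP/imfsetP => [H'C|[H HA ->]].
  by have [H HA <-] := lat_iso_preimage H'C; exists H; rewrite ?phiA.
by rewrite phiA // lat_iso_mem.
Qed.

Lemma lker0_limg_Lset (phi : 'End(V)) (P : sub -> Prop) X :
  lker phi == 0%VS -> (forall H, P H -> H \in A /\ (phi @: H)%VS = g H) ->
  Lset P X -> Lat A X /\ (phi @: X)%VS = g X.
Proof.
move=> kphi phiP [B [PB ->]].
have LB H : H \in B -> Lat A H by move/PB/phiP => [HA _]; apply: Lset_base.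
rewrite big_seq; split; first exact: Lset_bigcap.
rewrite lker0_limg_bigcap // lat_iso_bigcap //.
by apply: eq_bigr => H /PB/phiP[].
Qed.

Lemma lker0_limg_Gen (phi : 'End(V)) (S : {fset sub}) i H :
  lker phi == 0%VS -> S `<=` A -> (forall H, H \in S -> (phi @: H)%VS = g H) ->
  Gen A S i H -> (phi @: H)%VS = g H.
Proof.
move=> kphi SA phiS GiH.
have GenP j H' : Gen A S j H' -> H' \in A /\ (phi @: H')%VS = g H'; last by case: (GenP _ _ GiH).
elim: j H' => [|j IH] H'; first by move=> HS; split; [apply: (fsubsetP SA) | apply: phiS].
move=> [HA [J [LJ eH]]]; split=> //.
apply: (lker0_limg_hyperplane kphi (arrA HA) (arrC (lat_iso_mem HA))).
rewrite {1}eH limg_sum; apply/subv_sum_seqP => X XJ.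
have [LX ->] := lker0_limg_Lset kphi IH (LJ X XJ).
rewrite -lat_iso_subvE //; last exact: Lset_base.
by rewrite eH; exact: sumv_seq_sup XJ.
Qed.

Lemma exists_frame_map_lat_iso (Hs : 'I_l -> sub) H0 :
  (forall i, Hs i \in A) -> (\bigcap_i Hs i)%VS = 0%VS -> H0 \in A ->
  exists phi : 'End(V), [/\ lker phi == 0%VS,
    forall i, (phi @: Hs i)%VS = g (Hs i) & (phi @: H0)%VS = g H0].
Proof.
move=> HsA Hs0 H0A; have hHs i := arrA (HsA i).
have LHs i : Lat A (Hs i) := Lset_base (HsA i).
have g_line i : g (\bigcap_(j | j != i) Hs j)%VS = (\bigcap_(j | j != i) g (Hs j))%VS.
  exact: lat_iso_bigcap (fun j _ => LHs j).
have L_line i : Lat A (\bigcap_(j | j != i) Hs j)%VS := Lset_bigcap _ (fun j _ => LHs j).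
have [v vF] := exists_adapted (bigcap_neq_not_subv hHs Hs0).
have [v' v'F] : exists v', adapted (fun i => g (Hs i)) v'.
  by apply: exists_adapted => i; rewrite -g_line -lat_iso_subvE ?bigcap_neq_not_subv.
apply: (exists_frame_map hHs _ (arrA H0A) _ vF v'F) => [i||i].
- exact: arrC (lat_iso_mem (HsA i)).
- exact: arrC (lat_iso_mem H0A).
by rewrite (memv_adaptedE vF) (memv_adaptedE v'F) -g_line -lat_iso_subvE //; apply: Lset_base.
Qed.

End LatticeIso.

Lemma bigcap_subv_Gen (A S : {fset sub}) i H : arrangement A -> S `<=` A -> S != fset0 ->
  Gen A S i H -> (\bigcap_(H' <- S) H' <= H)%VS.
Proof.
move=> arrA SA /fset0Pn[s sS]; elim: i H => [|i IH] H; first exact: bigcapv_seq_inf.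
move=> [HA [J [LJ eH]]]; rewrite eH; have [J0|[X XJ]] := fset_0Vmem J.
  (* [H] is the empty sum [0], a hyperplane only if [l = 1], where all hyperplanes are [0]. *)
  suff s0 : s = 0%VS by apply: subv_trans (bigcapv_seq_inf sS) _; rewrite s0 sub0v.
  have := arrA _ HA; have := arrA _ (fsubsetP SA _ sS).
  rewrite /is_hyperplane eH J0 big_seq_fset0 dimv0 => ds dH.
  by apply/eqP; rewrite -dimv_eq0; apply/eqP; lia.
apply: subv_trans (sumv_seq_sup XJ); have [B [GB ->]] := LJ X XJ.
by apply/subv_bigcap_seqP => H' /GB; apply: IH.
Qed.

Lemma bigcap_generating_eq0 (A S : {fset sub}) :
  arrangement A -> essential A -> S `<=` A -> S != fset0 ->
  (forall H, H \in A -> generated A S H) -> (\bigcap_(H <- S) H)%VS = 0%VS.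
Proof.
move=> arrA essA SA S_neq0 genS; apply/eqP; rewrite -subv0 -essA.
apply/subv_bigcap_seqP => H /genS[i GiH].
exact: bigcap_subv_Gen GiH.
Qed.

Lemma exists_frame (S : {fset sub}) : #|` S| = l.+1 -> (\bigcap_(H <- S) H)%VS = 0%VS ->
  exists H0 (Hs : 'I_l -> sub), [/\ H0 \in S, forall i, Hs i \in S,
    forall H, H \in S -> H = H0 \/ exists i, H = Hs i & (\bigcap_i Hs i)%VS = 0%VS].
Proof.
move=> cardS S0; set s := enum_fset S.
have [k kl sk] := exists_nth_supv_bigcap_take (s := s) cardS.
set r := take k s ++ drop k.+1 s.
have sr : size r = l by rewrite size_cat size_take size_drop cardS kl; lia.
have s_eq : s = take k s ++ nth 0%VS s k :: drop k.+1 s.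
  by rewrite -drop_nth ?cardS // cat_take_drop.
have mem_r H : H \in r -> exists i : 'I_l, H = nth 0%VS r i.
  move=> Hr; have ir : (index H r < l)%N by rewrite -[X in (_ < X)%N]sr index_mem.
  by exists (Ordinal ir); rewrite nth_index.
have r_S H : H \in r -> H \in S by rewrite mem_cat => /orP[/mem_take|/mem_drop].
exists (nth 0%VS s k), (fun i => nth 0%VS r i); split.
- by rewrite mem_nth ?cardS.
- by move=> i; apply: r_S; rewrite mem_nth ?sr.
- move=> H; rewrite -[H \in S]/(H \in s) {1}s_eq mem_cat in_cons.
  case/or3P => [Ht|/eqP->|Hd]; [right|by left|right]; apply: mem_r.
    by rewrite /r mem_cat Ht.
  by rewrite /r mem_cat Hd orbT.
have r_sub H : H \in r -> (\bigcap_(i < l) nth 0%VS r i <= H)%VS.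
  by move=> /mem_r[i ->]; apply: (bigcapv_inf i).
apply/eqP; rewrite -subv0 -[X in (_ <= X)%VS]S0; apply/subv_bigcap_seqP => H.
rewrite -[H \in S]/(H \in s) {1}s_eq mem_cat in_cons => /or3P[Ht|/eqP->|Hd].
- by apply: r_sub; rewrite /r mem_cat Ht.
- apply: subv_trans sk; apply/subv_bigcap_seqP => H' Ht.
  by apply: r_sub; rewrite /r mem_cat Ht.
by apply: r_sub; rewrite /r mem_cat Hd orbT.
Qed.

End Arrangements.

Theorem mainTheorem3 (K : fieldType) (l : nat) (A : {fset {vspace 'rV[K]_l}}) :
  arrangement A -> essential A -> irreducible A ->
  (exists S : {fset {vspace 'rV[K]_l}},
     [/\ S `<=` A, #|` S| = l.+1 & forall H, H \in A <-> generated A S H]) ->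
  proj_unique A.
Proof.
move=> arrA essA _ [S [SA cardS genS]] C arrC [g giso].
have S_neq0 : S != fset0 by apply/eqP => S0; move: cardS; rewrite S0 cardfs0.
have S0 := bigcap_generating_eq0 arrA essA SA S_neq0 (fun H => (genS H).1).
have [H0 [Hs [H0S HsS coverS Hs0]]] := exists_frame cardS S0.
have [phi [kphi phiHs phiH0]] :=
  exists_frame_map_lat_iso arrA arrC giso (fun i => fsubsetP SA _ (HsS i)) Hs0 (fsubsetP SA _ H0S).
have phiS H : H \in S -> (phi @: H)%VS = g H by case/coverS => [->|[i ->]].
exists phi; split; first exact/eqP.
apply: (lat_iso_image arrA arrC giso) => H /genS[i GiH].
exact: (lker0_limg_Gen arrA arrC giso kphi SA phiS GiH).
Qed.
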